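(* Let $K$ be the cycle Kirchhoff–Symanzik matrix and ${*K}$ the cocycle Kirchhoff–Symanzik matrix. Then every eigenvalue of $K$ and of ${*K}$ is $\ge 1$. Moreover, for every $\lambda>1$, $\lambda$ is an eigenvalue of $K$ if and only if it is an eigenvalue of ${*K}$, with the same multiplicity. Consequently the multiplicities $m_K(1)$, $m_{*K}(1)$ of the eigenvalue $1$ satisfy $m_K(1)-m_{*K}(1)=(|E|-|V|+1)-(|V|-1)$; in particular if $|E|=2|V|-2$ then $K$ and ${*K}$ have the same spectrum with multiplicities and are similar.
   Context: Setup. Let $G=(V,E)$ be a finite connected graph with oriented edges (loops and multiple edges allowed), with edge space $\mathbb{R}^{E}$ carrying the Euclidean inner product $\langle\cdot,\cdot\rangle$, each edge identified with its standard basis vector. Fix a spanning tree $T\subseteq E$ of the underlying undirected graph. Edges in $T$ are cochords $e_\mu$, $\mu=1,\dots,|V|-1$; edges not in $T$ are chords $e_\alpha$, $\alpha=|V|,\dots,|E|$. For a chord $e_\alpha$, $T\cup\{e_\alpha\}$ contains a unique cycle; $c_\alpha\in\mathbb{R}^E$ has entry $+1$ (resp. $-1$) on each edge of this cycle whose orientation agrees (resp. disagrees) with traversal of the cycle in the direction of $e_\alpha$, and $0$ elsewhere. For a cochord $e_\mu$, $T\setminus\{e_\mu\}$ has two components; let $S_\mu$ be the vertex set of the component containing the tail of $e_\mu$; $c_\mu\in\mathbb{R}^E$ has entry $+1$ on edges with tail in $S_\mu$ and head not in $S_\mu$, $-1$ on edges with head in $S_\mu$ and tail not in $S_\mu$,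 and $0$ elsewhere. The cycle Kirchhoff–Symanzik (KS) matrix is the $(|E|-|V|+1)\times(|E|-|V|+1)$ Gram matrix $K=(\langle c_\alpha,c_{\alpha'}\rangle)_{\alpha,\alpha'}$; the cocycle KS matrix is the $(|V|-1)\times(|V|-1)$ Gram matrix ${*K}=(\langle c_\mu,c_{\mu'}\rangle)_{\mu,\mu'}$. *)

From HB Require Import structures.
From mathcomp Require Import all_boot all_order all_algebra.
Set Implicit Arguments. Unset Strict Implicit. Unset Printing Implicit Defensive.
Import Order.TTheory GRing.Theory Num.Theory.
Local Open Scope ring_scope.

(* A finite oriented multigraph (loops / multiple edges allowed):
   vertex type V, edge type E, each edge f with tail (tl f) and head (hd f). *)
Section Graph.
Variables (V E : finType) (tl hd : E -> V).

Definition adj (F : {set E}) : rel V :=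
  fun x y => [exists f in F, ((tl f == x) && (hd f == y)) || ((tl f == y) && (hd f == x))].

Definition gconnected (F : {set E}) : Prop := forall x y, connect (adj F) x y.

(* T is a spanning tree of the underlying undirected graph: it connects all
   vertices, and it is acyclic (every edge of T is a bridge of T, i.e. T is
   minimally connected). *)
Definition spanning_tree (T : {set E}) : Prop :=
  gconnected T /\ forall e, e \in T -> ~~ connect (adj (T :\ e)) (tl e) (hd e).

(* a step of a walk: an edge with a flag "traversed along its orientation" *)
Definition step_ok (x : V) (s : E * bool) : bool :=
  if s.2 then tl s.1 == x else hd s.1 == x.
Definition step_next (s : E * bool) : V := if s.2 then hd s.1 else tl s.1.

Fixpoint is_walk (F : {set E}) (x : V) (p : seq (E * bool)) : bool :=
  match p with
  | [::] => true
  | s :: p' => [&& s.1 \in F, step_ok x s & is_walk F (step_next s) p']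
  end.

Definition simple_path (F : {set E}) (x y : V) (p : seq (E * bool)) : bool :=
  [&& is_walk F x p, uniq (x :: map step_next p) & last x (map step_next p) == y].

Variable R : numDomainType.

Definition pathvec (p : seq (E * bool)) (f : E) : R :=
  \sum_(s <- p) (if s.1 == f then (if s.2 then 1 else -1) else 0).

(* c is the fundamental cycle vector of chord e w.r.t. T: the unique cycle in
   T ∪ {e} consists of e followed by the (unique) simple tree path from the head
   of e back to its tail; entries are +1/-1 according to agreement of
   orientation with traversal in the direction of e, 0 elsewhere. *)
Definition fund_cycle (T : {set E}) (e : E) (c : E -> R) : Prop :=
  exists p, simple_path T (hd e) (tl e) p /\
            forall f, c f = (f == e)%:R + pathvec p f.

Definition cut_side (T : {set E}) (e : E) : {set V} :=
  [set v | connect (adj (T :\ e)) (tl e) v].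

Definition fund_cocycle (T : {set E}) (e : E) (f : E) : R :=
  let S := cut_side T e in
  if (tl f \in S) && (hd f \notin S) then 1
  else if (hd f \in S) && (tl f \notin S) then -1 else 0.

(* cycle KS matrix: Gram matrix of the chord cycle vectors (chords = edges not in T) *)
Definition cycleKS (T : {set E}) (c : E -> E -> R) : 'M[R]_#|~: T| :=
  \matrix_(i, j) \sum_f c (enum_val i) f * c (enum_val j) f.

Definition cocycleKS (T : {set E}) : 'M[R]_#|T| :=
  \matrix_(i, j) \sum_f fund_cocycle T (enum_val i) f * fund_cocycle T (enum_val j) f.

End Graph.

(* Write A for the chord-by-tree-edge matrix of the entries of the fundamental
   cycle vectors on tree edges. Off the tree a cycle vector is the indicator of
   its chord; on the tree, the cocycle vector of a tree edge e is the indicator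
   of e, and its entry on a chord a equals minus the entry of the cycle vector
   of a on e (the indicator of the cut side of e telescopes along the tree path
   of a). Hence K = 1 + A A^T and *K = 1 + A^T A. Their eigenvalues are >= 1
   since A A^T and A^T A are positive semidefinite, and Sylvester's determinant
   identity gives chi_K (X - 1)^|T| = (X - 1)^|E \ T| chi_*K. Finally
   |T| = |V| - 1 because the incidence matrix of the tree has full column rank
   and a one-dimensional left kernel; when A is square, A^T + K2^T K1 (with K1,
   K2 bases of the left kernels of A and A^T) intertwines A A^T and A^T A. *)
From HB Require Import structures.
From mathcomp Require Import all_boot all_order all_algebra.
From mathcomp Require Import lra zify.
Set Implicit Arguments. Unset Strict Implicit. Unset Printing Implicit Defensive.
Import Order.TTheory GRing.Theory Num.Theory.
Local Open Scope ring_scope.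

Lemma sylvester_det (R : comNzRingType) m n (Y : R)
    (A : 'M[R]_(m, n)) (B : 'M[R]_(n, m)) :
  \det (Y%:M - A *m B) * Y ^+ n = Y ^+ m * \det (Y%:M - B *m A).
Proof.
pose N := block_mx (Y%:M : 'M_m) A B (1%:M : 'M_n).
have lowN : block_mx (1%:M : 'M_m) (- A) 0 (Y%:M : 'M_n) *m N =
            block_mx (Y%:M - A *m B) 0 (Y *: B) Y%:M.
  rewrite mulmx_block !mul1mx !mul0mx !add0r !mulmx1 mulNmx addrN.
  by rewrite mul_scalar_mx.
have uppN : block_mx (1%:M : 'M_m) 0 (- B) (Y%:M : 'M_n) *m N =
            block_mx Y%:M A 0 (Y%:M - B *m A).
  rewrite mulmx_block !mul1mx !mul0mx !addr0 !mulmx1 mulNmx.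
  by rewrite mul_scalar_mx mul_mx_scalar addNr addrC mulNmx.
move: (congr1 determinant lowN) (congr1 determinant uppN).
rewrite !det_mulmx det_ublock det_lblock det_lblock det_ublock det1 !mul1r.
by rewrite !det_scalar => <- ->.
Qed.

Lemma eigenvalue_mup_gt0 (F : fieldType) n (A : 'M[F]_n) a :
  eigenvalue A a = (0 < mup a (char_poly A))%N.
Proof.
by rewrite eigenvalue_root_char mup_geq ?monic_neq0 ?char_poly_monic // expr1 dvdp_XsubCl.
Qed.

Section AddGram.
Variable R : realFieldType.

Lemma rV_dot_self k (v : 'rV[R]_k) : (v *m v^T) 0 0 = \sum_i v 0 i ^+ 2.
Proof. by rewrite !mxE; apply: eq_bigr => i _; rewrite mxE expr2. Qed.

Lemma rV_dot_self_ge0 k (v : 'rV[R]_k) : 0 <= (v *m v^T) 0 0.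
Proof. by rewrite rV_dot_self sumr_ge0 // => i _; rewrite sqr_ge0. Qed.

Lemma rV_dot_self_eq0 k (v : 'rV[R]_k) : ((v *m v^T) 0 0 == 0) = (v == 0).
Proof.
apply/idP/eqP => [|->]; last by rewrite mul0mx mxE.
rewrite rV_dot_self psumr_eq0 => [/allP v0|i _]; last exact: sqr_ge0.
apply/rowP => i; rewrite mxE.
by apply/eqP; rewrite -sqrf_eq0; apply: v0; rewrite mem_index_enum.
Qed.

Lemma gram_form_eq0 k l (u : 'rV[R]_k) (N : 'M[R]_(k, l)) :
  u *m N *m N^T *m u^T = 0 -> u *m N = 0.
Proof.
by move=> uNu; apply/eqP; rewrite -rV_dot_self_eq0 trmx_mul !mulmxA uNu mxE.
Qed.

Lemma eigenvalue_addGram_ge1 m n (A : 'M[R]_(m, n)) a :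
  eigenvalue (1%:M + A *m A^T) a -> 1 <= a.
Proof.
case/eigenvalueP => v vK v_neq0.
have : v *m (1%:M + A *m A^T) *m v^T = v *m v^T + v *m A *m (v *m A)^T.
  by rewrite mulmxDr mulmx1 mulmxDl trmx_mul !mulmxA.
rewrite vK -scalemxAl => /(congr1 (fun M : 'M_1 => M 0 0)).
rewrite mxE [in RHS]mxE.
have vA_ge0 := rV_dot_self_ge0 (v *m A).
have v_gt0 : 0 < (v *m v^T) 0 0 by rewrite lt_def rV_dot_self_eq0 v_neq0 rV_dot_self_ge0.
move: vA_ge0 v_gt0; move: (_ 0 0) (_ 0 0) => t s; nra.
Qed.

Lemma char_poly_addGram m n (A : 'M[R]_(m, n)) :
  char_poly (1%:M + A *m A^T) * ('X - 1%:P) ^+ n =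
  ('X - 1%:P) ^+ m * char_poly (1%:M + A^T *m A).
Proof.
rewrite /char_poly /char_poly_mx !map_mxD !map_mx1 !map_mxM -!map_trmx polyC1.
have shift k (M : 'M[{poly R}]_k) : 'X%:M - (1%:M + M) = ('X - 1)%:M - M.
  by rewrite (raddfB (@scalar_mx _ k)) opprD addrA.
by rewrite !shift sylvester_det.
Qed.

Lemma mup_char_addGram m n (A : 'M[R]_(m, n)) a :
  (mup a (char_poly (1%:M + A *m A^T)) + (if 1%R == a then n else 0) =
   (if 1%R == a then m else 0) + mup a (char_poly (1%:M + A^T *m A)))%N.
Proof.
have XsubC_neq0 k : (('X - 1%:P) ^+ k : {poly R}) != 0.
  by rewrite expf_neq0 // polyXsubC_eq0.
have char_neq0 k (M : 'M[R]_k) : char_poly M != 0 by rewrite monic_neq0 ?char_poly_monic.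
move: (congr1 (mup a) (char_poly_addGram A)).
by rewrite !mupM ?char_neq0 ?XsubC_neq0 // !mup_XsubCX.
Qed.

Section Intertwiner.
Variables (n d : nat) (M : 'M[R]_n) (K1 K2 : 'M[R]_(d, n)).
Hypotheses (K1M : K1 *m M = 0) (K2M : K2 *m M^T = 0).

Lemma intertwiner_gram :
  (M^T + K2^T *m K1) *m (M *m M^T) = (M^T *m M) *m (M^T + K2^T *m K1).
Proof.
have MK2 : M *m K2^T = 0 by rewrite -[M]trmxK -trmx_mul K2M trmx0.
rewrite mulmxDl mulmxDr -!mulmxA (mulmxA K1 M) K1M mul0mx mulmx0.
by rewrite (mulmxA M K2^T) MK2 mul0mx mulmx0.
Qed.

Lemma intertwiner_unit :
  row_free K1 -> (kermx M^T <= K2)%MS -> (M^T + K2^T *m K1) \in unitmx.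
Proof.
move=> freeK1 kerK2; rewrite -row_free_unit -kermx_eq0.
apply/eqP/row_matrixP => i; rewrite row0; set v := row i _.
have vP : v *m (M^T + K2^T *m K1) = 0 by rewrite -row_mul mulmx_ker row0.
(* right-multiplying by M kills the K2^T K1 term, leaving v M^T M = 0 *)
have vM : v *m M^T = 0.
  apply: gram_form_eq0; rewrite trmxK.
  move: (congr1 (mulmx^~ M) vP); rewrite mulmxDr mulmxDl mul0mx.
  rewrite -(mulmxA v (K2^T *m K1)) -(mulmxA K2^T) K1M !mulmx0 addr0 => ->.
  by rewrite mul0mx.
have /submxP [D vD] : (v <= K2)%MS by apply: submx_trans kerK2; apply/sub_kermxP.
move: vP; rewrite mulmxDr vM add0r mulmxA => /eqP; rewrite mulmx_free_eq0 //.
by clearbody v; subst v => /eqP DK2; apply: gram_form_eq0; rewrite DK2 mul0mx.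
Qed.

End Intertwiner.

Lemma addGram_similar m n (H : m = n) (A : 'M[R]_(m, n)) :
  exists P : 'M[R]_n, P \in unitmx /\
    P *m castmx (H, H) (1%:M + A *m A^T) = (1%:M + A^T *m A) *m P.
Proof.
case: n / H A => A; rewrite castmx_id.
have K1A : row_base (kermx A) *m A = 0 by apply/sub_kermxP; rewrite eq_row_base.
have K2A : row_base (kermx A^T) *m A^T = 0 by apply/sub_kermxP; rewrite eq_row_base.
have kerK2 : (kermx A^T <= row_base (kermx A^T))%MS by rewrite eq_row_base.
have rk : \rank (kermx A^T) = \rank (kermx A) by rewrite !mxrank_ker mxrank_tr.
move: (row_base (kermx A^T)) K2A kerK2; rewrite rk => K2 K2A kerK2.
exists (A^T + K2^T *m row_base (kermx A)); split.
  exact: intertwiner_unit (row_base_free _) kerK2.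
by rewrite mulmxDr mulmx1 intertwiner_gram // mulmxDl mul1mx.
Qed.

End AddGram.

Section FundamentalVectors.
Variables (R : numDomainType) (V E : finType) (tl hd : E -> V).

Lemma pathvec_cons (s : E * bool) p f :
  pathvec R (s :: p) f =
  (if s.1 == f then (if s.2 then 1 else -1) else 0) + pathvec R p f.
Proof. by rewrite /pathvec big_cons. Qed.

Lemma pathvec_notin F x p f :
  is_walk tl hd F x p -> f \notin F -> pathvec R p f = 0.
Proof.
elim: p x => [|s p IHp] x /=; first by rewrite /pathvec big_nil.
case/and3P => sF _ walk_p fF; rewrite pathvec_cons (IHp _ walk_p fF) addr0.
by case: eqP => // sf; rewrite -sf sF in fF.
Qed.

Lemma pathvec_telescope F x p (g : V -> R) : is_walk tl hd F x p ->
  \sum_f pathvec R p f * (g (tl f) - g (hd f)) =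
  g x - g (last x (map (step_next tl hd) p)).
Proof.
elim: p x => [|s p IHp] x /=.
  by move=> _; rewrite subrr big1 // => f _; rewrite /pathvec big_nil mul0r.
case/and3P => _ ok walk_p.
under eq_bigr => f _ do rewrite pathvec_cons mulrDl.
rewrite big_split /= (IHp _ walk_p) (bigD1 s.1) //= eqxx big1 ?addr0; last first.
  by move=> f /negbTE; rewrite eq_sym => ->; rewrite mul0r.
move: ok; rewrite /step_ok /step_next; case: s.2 => /eqP ->.
  by rewrite mul1r addrA subrK.
by rewrite mulN1r opprB addrA subrK.
Qed.

Lemma adj_sym F : symmetric (adj tl hd F).
Proof. by move=> x y; apply: eq_existsb => f; rewrite orbC. Qed.

Lemma fund_cocycleE T e f : fund_cocycle tl hd R T e f =
  (tl f \in cut_side tl hd T e)%:R - (hd f \in cut_side tl hd T e)%:R.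
Proof.
rewrite /fund_cocycle.
by case: (tl f \in _); case: (hd f \in _); rewrite ?subrr ?subr0 ?sub0r.
Qed.

Variable T : {set E}.
Hypothesis treeT : spanning_tree tl hd T.

Lemma fund_cocycle_tree e f : e \in T -> f \in T ->
  fund_cocycle tl hd R T e f = (f == e)%:R.
Proof.
move=> eT fT; rewrite fund_cocycleE; case: (f =P e) => [->|/eqP fe].
  by rewrite !inE connect0 (negbTE (treeT.2 e eT)) subr0.
have fadj : adj tl hd (T :\ e) (tl f) (hd f).
  by apply/existsP; exists f; rewrite !inE fT fe !eqxx.
by rewrite !inE (same_connect1r (sym_connect_sym (@adj_sym _)) fadj) subrr.
Qed.

Lemma fund_cocycle_chord (c : E -> R) e a : e \in T -> a \notin T ->
  fund_cycle tl hd T a c -> fund_cocycle tl hd R T e a = - c e.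
Proof.
move=> eT aT [p [/and3P [walk_p _ /eqP end_p] cE]].
pose side v : R := (v \in cut_side tl hd T e)%:R.
have := pathvec_telescope side walk_p; rewrite end_p.
(* only the tree edge e separates the two sides of its own cut *)
rewrite (bigD1 e) //= big1 ?addr0 => [drop|f fe]; last first.
  have [fT|fT] := boolP (f \in T); last by rewrite (pathvec_notin walk_p fT) mul0r.
  by rewrite /side -fund_cocycleE fund_cocycle_tree // (negbTE fe) mulr0.
rewrite /side -fund_cocycleE fund_cocycle_tree // eqxx mulr1 in drop.
by rewrite cE (negbTE (memPn aT e eT)) add0r drop opprB fund_cocycleE.
Qed.

Variable c : E -> E -> R.
Hypothesis cycle_c : forall e, e \notin T -> fund_cycle tl hd T e (c e).

Lemma fund_cycle_chord a f : a \notin T -> f \notin T -> c a f = (f == a)%:R.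
Proof.
move=> aT fT; have [p [/and3P [walk_p _ _] cE]] := cycle_c aT.
by rewrite cE (pathvec_notin walk_p fT) addr0.
Qed.

Definition chord_tree_mx : 'M[R]_(#|~: T|, #|T|) :=
  \matrix_(i, j) c (enum_val i) (enum_val j).

Lemma chord_enum_notin (i : 'I_#|~: T|) : enum_val i \notin T.
Proof. by have := enum_valP i; rewrite inE. Qed.

Lemma cycleKS_addGram :
  cycleKS T c = 1%:M + chord_tree_mx *m chord_tree_mx^T.
Proof.
apply/matrixP => i j; rewrite !mxE (bigID (mem T)) /= addrC; congr (_ + _).
  rewrite (bigD1 (enum_val i)) ?chord_enum_notin //= big1 ?addr0 => [|f /andP [fT fi]].
    by rewrite !fund_cycle_chord ?chord_enum_notin // eqxx mul1r (inj_eq enum_val_inj).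
  by rewrite !fund_cycle_chord ?chord_enum_notin // (negbTE fi) mul0r.
by rewrite big_enum_val; apply: eq_bigr => k _; rewrite !mxE.
Qed.

Lemma cocycleKS_addGram :
  cocycleKS tl hd R T = 1%:M + chord_tree_mx^T *m chord_tree_mx.
Proof.
have tree_enum (k : 'I_#|T|) : enum_val k \in T by apply: enum_valP.
apply/matrixP => i j; rewrite !mxE (bigID (mem T)) /=; congr (_ + _).
  rewrite (bigD1 (enum_val i)) ?tree_enum //= big1 ?addr0 => [|f /andP [fT fi]].
    rewrite !fund_cocycle_tree ?tree_enum // eqxx mul1r (inj_eq enum_val_inj).
    by rewrite eq_sym.
  by rewrite !fund_cocycle_tree ?tree_enum // (negbTE fi) mul0r.
rewrite (eq_bigl (mem (~: T))) => [|f]; last by rewrite !inE.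
rewrite big_enum_val; apply: eq_bigr => k _; rewrite !mxE.
have chord_k := chord_enum_notin k.
by rewrite !(fund_cocycle_chord (tree_enum _) chord_k (cycle_c chord_k)) mulrNN.
Qed.

End FundamentalVectors.

Lemma sum_mul_delta (R : pzRingType) (I : finType) (w : I -> R) t :
  \sum_x w x * (t == x)%:R = w t.
Proof.
rewrite (bigD1 t) //= eqxx mulr1 big1 ?addr0 // => x xt.
by rewrite eq_sym (negbTE xt) mulr0.
Qed.

Section TreeIncidence.
Variables (R : numFieldType) (V E : finType) (tl hd : E -> V) (T : {set E}).
Hypothesis treeT : spanning_tree tl hd T.

Definition incidence_mx : 'M[R]_(#|V|, #|T|) :=
  \matrix_(v, k) ((tl (enum_val k) == enum_val v)%:R
                  - (hd (enum_val k) == enum_val v)%:R).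

Lemma sum_mul_incidence (w : 'I_#|V| -> R) k :
  \sum_v w v * incidence_mx v k =
  w (enum_rank (tl (enum_val k))) - w (enum_rank (hd (enum_val k))).
Proof.
rewrite (reindex (@enum_rank V)); last first.
  by exists enum_val => x _; [exact: enum_rankK | exact: enum_valK].
under eq_bigr => x _ do rewrite mxE enum_rankK mulrBr.
by rewrite sumrB !(sum_mul_delta (fun x => w (enum_rank x))).
Qed.

Lemma mxrank_incidence : \rank incidence_mx = #|T|.
Proof.
pose X : 'M[R]_(#|T|, #|V|) :=
  \matrix_(k, v) ((enum_val v \in cut_side tl hd T (enum_val k))%:R).
have XB : X *m incidence_mx = 1%:M.
  apply/matrixP => k l; rewrite mxE (sum_mul_incidence (X k)) !mxE !enum_rankK.
  rewrite -fund_cocycleE fund_cocycle_tree ?enum_valP //.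
  by rewrite (inj_eq enum_val_inj) eq_sym.
apply/eqP; rewrite eqn_leq rank_leq_col /=.
by have := mxrankM_maxr X incidence_mx; rewrite XB mxrank1.
Qed.

Lemma incidence_left_ker_const (r : 'rV[R]_#|V|) :
  r *m incidence_mx = 0 -> forall x y, r 0 (enum_rank x) = r 0 (enum_rank y).
Proof.
move=> rB; pose W x := r 0 (enum_rank x).
have W_adj x y : adj tl hd T x y -> W x = W y.
  case/existsP => f /andP [fT tl_hd_f].
  move/(congr1 (fun M : 'rV_#|T| => M 0 (enum_rank_in fT f))): rB.
  rewrite !mxE sum_mul_incidence (enum_rankK_in fT fT) => /eqP; rewrite subr_eq0.
  by case/orP: tl_hd_f => /andP [/eqP-> /eqP->] /eqP.
move=> x y; rewrite -/(W x) -/(W y).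
have /connectP [p path_p ->] := treeT.1 x y.
elim: p x path_p => [|z p IHp] x //= /andP [xz path_p].
by rewrite (W_adj _ _ xz) (IHp _ path_p).
Qed.

Lemma mxrank_ker_incidence : (0 < #|V|)%N -> \rank (kermx incidence_mx) = 1%N.
Proof.
move=> V_gt0; pose u : 'rV[R]_#|V| := const_mx 1.
have u_neq0 : u != 0.
  by apply/eqP => /rowP /(_ (Ordinal V_gt0)); rewrite !mxE => /eqP; rewrite oner_eq0.
have rank_u : \rank u = 1%N by rewrite rank_rV u_neq0.
rewrite -rank_u; apply/eqP; rewrite eqn_leq; apply/andP; split; apply: mxrankS.
  apply/row_subP => i; set r := row i _.
  have rB : r *m incidence_mx = 0 by rewrite -row_mul mulmx_ker row0.
  have -> : r = r 0 (Ordinal V_gt0) *: u.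
    apply/rowP => v; rewrite [RHS]mxE [u _ _]mxE mulr1 -[v]enum_valK -[Ordinal _]enum_valK.
    exact: incidence_left_ker_const.
  exact: scalemx_sub.
apply/sub_kermxP/rowP => l.
by rewrite !mxE (sum_mul_incidence (u 0)) !mxE subrr.
Qed.

End TreeIncidence.

Lemma card_spanning_tree (V E : finType) (tl hd : E -> V) (T : {set E}) :
  spanning_tree tl hd T -> (0 < #|V|)%N -> #|V| = #|T|.+1.
Proof.
move=> treeT V_gt0; have := mxrank_ker_incidence rat treeT V_gt0.
by rewrite mxrank_ker mxrank_incidence //; lia.
Qed.

Theorem theorem5 (R : rcfType) (V E : finType) (tl hd : E -> V)
  (T : {set E}) (c : E -> E -> R)
  (HV : (0 < #|V|)%N)
  (Hconn : gconnected tl hd setT)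
  (HT : spanning_tree tl hd T)
  (Hc : forall e, e \notin T -> fund_cycle tl hd T e (c e)) :
  let K := cycleKS T c in
  let sK := @cocycleKS V E tl hd R T in
  (forall a : R, eigenvalue K a -> 1 <= a) /\
  (forall a : R, eigenvalue sK a -> 1 <= a) /\
  (forall a : R, 1 < a -> (eigenvalue K a <-> eigenvalue sK a) /\
                          mup a (char_poly K) = mup a (char_poly sK)) /\
  ((mup 1 (char_poly K))%:Z - (mup 1 (char_poly sK))%:Z =
     (#|E|%:Z - #|V|%:Z + 1) - (#|V|%:Z - 1)) /\
  (#|E| = (2 * #|V| - 2)%N ->
     (forall a : R, mup a (char_poly K) = mup a (char_poly sK)) /\
     exists H : #|~: T| = #|T|,
       exists P : 'M[R]_#|T|, P \in unitmx /\ P *m castmx (H, H) K = sK *m P).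
Proof.
move=> K sK; set A := chord_tree_mx T c.
have K_eq : K = 1%:M + A *m A^T := cycleKS_addGram Hc.
have sK_eq : sK = 1%:M + A^T *m A := cocycleKS_addGram HT Hc.
have cardV : #|V| = #|T|.+1 := card_spanning_tree HT HV.
have cardE : (#|T| + #|~: T|)%N = #|E| := cardsC T.
(* restated over [R : rcfType] so that [lia] sees the same [mup] terms as the goal *)
have mupE (a : R) :
    (mup a (char_poly K) + (if 1%R == a then #|T| else 0) =
     (if 1%R == a then #|~: T| else 0) + mup a (char_poly sK))%N.
  by rewrite K_eq sK_eq; apply: mup_char_addGram.
have mup1 : (mup 1 (char_poly K) + #|T| = #|~: T| + mup 1 (char_poly sK))%N.
  by have := mupE 1; rewrite eqxx.
split; first by move=> a; rewrite K_eq; apply: eigenvalue_addGram_ge1.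
split.
  by move=> a; rewrite sK_eq; have := @eigenvalue_addGram_ge1 _ _ _ A^T a; rewrite trmxK.
split.
  move=> a a_gt1; have := mupE a; rewrite lt_eqF // addn0 add0n => mup_a.
  by split; rewrite // !eigenvalue_mup_gt0 mup_a.
split; first lia.
move=> cardE2; have square : #|~: T| = #|T| by lia.
split; first by move=> a; have := mupE a; case: (1 == a); lia.
by exists square; rewrite K_eq sK_eq; apply: addGram_similar.
Qed.
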